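(* Let $k\ge2$ be an integer and let $n\ge4k-2$ be an even integer. Let $P$ be the property of being $k$-edge-connected. Then the number of $(P,n)$-sinks, i.e. $|S(P,n)|$, is at least $p(k-1)$, where $p$ denotes the integer partition function.
   Context: Graphs are finite and simple. A graphical sequence of length $n$ is a nondecreasing integer sequence that is the degree sequence of some graph (a realization). For nondecreasing sequences, $\pi'\ge\pi$ ($\pi'$ majorizes $\pi$) means termwise $\ge$. A graphical sequence is forcibly $P$ if every realization has property $P$. Let $G_n$ be the poset of graphical sequences of length $n$ under majorization and $\overline{P_n}$ the subposet of those not forcibly $P$; $S(P,n)$ is the set of maximal elements of $\overline{P_n}$. $p(r)$ is the number of partitions of the integer $r$. *)

From mathcomp Require Import all_boot.
Set Implicit Arguments. Unset Strict Implicit. Unset Printing Implicit Defensive.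

Definition simple_graph (n : nat) (g : rel 'I_n) : Prop :=
  (forall u v, g u v = g v u) /\ (forall u, ~~ g u u).

Definition deg (n : nat) (g : rel 'I_n) (u : 'I_n) : nat := #|[pred v | g u v]|.

Definition degseq (n : nat) (g : rel 'I_n) : seq nat :=
  sort leq [seq deg g u | u <- enum 'I_n].

Definition realizes (n : nat) (g : rel 'I_n) (d : seq nat) : Prop :=
  simple_graph g /\ degseq g = d.

(* graphical sequences of length n (nondecreasing by construction of degseq) *)
Definition graphical (n : nat) (d : seq nat) : Prop :=
  exists g : rel 'I_n, realizes g d.

Definition majorizes (d' d : seq nat) : Prop :=
  size d' = size d /\ all2 leq d d'.

Definition graph_property := forall n : nat, rel 'I_n -> Prop.

Definition forcibly (P : graph_property) (n : nat) (d : seq nat) : Prop :=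
  forall g : rel 'I_n, realizes g d -> P n g.

Definition not_forcibly (P : graph_property) (n : nat) (d : seq nat) : Prop :=
  graphical n d /\ ~ forcibly P n d.

Definition sink (P : graph_property) (n : nat) (d : seq nat) : Prop :=
  not_forcibly P n d /\
  (forall d', not_forcibly P n d' -> majorizes d' d -> d' = d).

Definition connected (n : nat) (g : rel 'I_n) : Prop :=
  forall u v : 'I_n, connect g u v.

Definition remove_edges (n : nat) (g : rel 'I_n) (F : {set {set 'I_n}}) : rel 'I_n :=
  fun u v => g u v && ([set u; v] \notin F).

Definition k_edge_connected (k : nat) : graph_property :=
  fun n g => forall F : {set {set 'I_n}}, #|F| < k -> connected (remove_edges g F).

(* integer partition function p(r): partitions of r correspond bijectively to
   nonincreasing r-tuples of numbers in [0, r] summing to r (pad with zeros). *)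
Definition partition_number (r : nat) : nat :=
  #|[set t : r.-tuple 'I_r.+1 |
       sorted geq [seq val i | i <- t] && (sumn [seq val i | i <- t] == r)]|.

From mathcomp Require Import all_boot zify.
From Stdlib Require Import Classical.

(* Write n = 2m and r = k - 1.  For a partition l of r, join two disjoint
   copies of K_m by r edges, vertex i of the first copy receiving l_i of them.
   Deleting these r < k edges disconnects the graph, so its degree sequence
   D_l is not forcibly k-edge-connected and lies below some sink.  The D_l are
   pairwise distinct, have minimum m - 1 and sum (m - 1) n + 2r.  On the other
   hand, if a graph with minimum degree at least m - 1 loses its connectivity
   after deleting fewer than k edges, counting degrees on both sides of the
   cut bounds the degree sum by (m - 1) n + 2 (k - 1).  So a sequence
   majorizing two different D_l is forcibly k-edge-connected, and distinct
   partitions of r give distinct sinks. *)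

Set Implicit Arguments. Unset Strict Implicit.

Lemma all2_refl (T : Type) (r : rel T) : reflexive r -> reflexive (all2 r).
Proof. by move=> r_refl; elim=> //= x s ->; rewrite r_refl. Qed.

Lemma all2_trans (T : Type) (r : rel T) : transitive r -> transitive (all2 r).
Proof.
move=> r_trans; elim=> [|y s2 IH] [|x s1] [|z s3] //= /andP[rxy h12] /andP[ryz h23].
by rewrite (r_trans _ _ _ rxy ryz) (IH _ _ h12 h23).
Qed.

Lemma leq_sumn_all2 (s t : seq nat) : all2 leq s t -> sumn s <= sumn t.
Proof. by elim: s t => [|x s IH] [|y t] //= /andP[xy st]; rewrite leq_add ?IH. Qed.

Lemma all2_leq_sumn_eq (s t : seq nat) : all2 leq s t -> sumn s = sumn t -> s = t.
Proof.
elim: s t => [|x s IH] [|y t] //= /andP[xy st] eq_sum.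
have le_st := leq_sumn_all2 st.
have -> : x = y by lia.
by rewrite (IH t) //; lia.
Qed.

Lemma all2_leq_lb (s t : seq nat) c :
  all2 leq s t -> {in s, forall x, c <= x} -> {in t, forall y, c <= y}.
Proof.
elim: s t => [|x s IH] [|y t] //= /andP[xy st] lb_s z.
rewrite inE => /predU1P[-> | zt]; first by rewrite (leq_trans _ xy) ?lb_s ?mem_head.
by apply: IH st _ z zt => w ws; rewrite lb_s // inE ws orbT.
Qed.

Lemma majorizes_refl d : majorizes d d.
Proof. by split=> //; apply: all2_refl leqnn _. Qed.

Lemma majorizes_trans d1 d2 d3 : majorizes d1 d2 -> majorizes d2 d3 -> majorizes d1 d3.
Proof.
move=> [size12 le21] [size23 le32]; split; first by rewrite size12.
exact: (all2_trans leq_trans le32 le21).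
Qed.

Lemma sumn_degseq n (g : rel 'I_n) : sumn (degseq g) = \sum_u deg g u.
Proof. by rewrite (perm_sumn (permEl (perm_sort _ _))) sumnE big_map big_enum. Qed.

Lemma mem_degseq n (g : rel 'I_n) u : deg g u \in degseq g.
Proof. by rewrite mem_sort map_f ?mem_enum. Qed.

Lemma graphical_sumn_le n d : graphical n d -> sumn d <= n * n.
Proof.
move=> [g [_ <-]]; rewrite sumn_degseq -[n in n * _]card_ord -sum_nat_const.
by apply: leq_sum => u _; rewrite -[n in _ <= n]card_ord max_card.
Qed.

(* Induction on [n * n - sumn d]: graphical sequences sum to at most [n * n]. *)
Lemma sink_majorizes P n d : not_forcibly P n d -> exists2 s, sink P n s & majorizes s d.
Proof.
have [N] := ubnP (n * n - sumn d); elim: N d => [|N IH] d // lt_N nf_d.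
have [[d' [nf_d' d'_d neq_d']] | no_d'] :=
  classic (exists d', [/\ not_forcibly P n d', majorizes d' d & d' <> d]); last first.
  exists d; last exact: majorizes_refl.
  by split=> // d' nf_d' d'_d; apply: NNPP => neq_d'; apply: no_d'; exists d'.
have lt_sum : sumn d < sumn d'.
  rewrite ltn_neqAle leq_sumn_all2 ?andbT; last exact: d'_d.2.
  by apply/eqP => eq_sum; apply: neq_d'; rewrite (all2_leq_sumn_eq d'_d.2).
have [|s sink_s s_d'] := IH d' _ nf_d'.
  by have := graphical_sumn_le nf_d'.1; lia.
by exists s => //; apply: majorizes_trans s_d' d'_d.
Qed.

Section EdgeCuts.

Variables (n : nat) (g : rel 'I_n).
Hypothesis g_simple : simple_graph g.
Implicit Types (A : {set 'I_n}) (F : {set {set 'I_n}}).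

Definition boundary_within (A : {set 'I_n}) (F : {set {set 'I_n}}) :=
  forall x y, x \in A -> y \notin A -> g x y -> [set x; y] \in F.

Lemma boundary_withinC A F : boundary_within A F -> boundary_within (~: A) F.
Proof.
move=> bA x y; rewrite !inE negbK => xA yA gxy.
by rewrite setUC bA // g_simple.1.
Qed.

Lemma remove_edges_sym F : symmetric (remove_edges g F).
Proof. by move=> x y; rewrite /remove_edges g_simple.1 setUC. Qed.

Lemma disconnected_boundary F u v : ~~ connect (remove_edges g F) u v ->
  exists A : {set 'I_n}, [/\ u \in A, v \notin A & boundary_within A F].
Proof.
move=> not_uv; exists [set w | connect (remove_edges g F) u w].
split; rewrite ?inE ?connect0 // => x y; rewrite !inE => ux not_uy gxy.
apply: contraNT not_uy => xy_F.
by apply: connect_trans ux (connect1 _); rewrite /remove_edges gxy.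
Qed.

Lemma not_k_edge_connected_cut k A F x y : #|F| < k ->
  x \in A -> y \notin A -> boundary_within A F -> ~ k_edge_connected k g.
Proof.
move=> card_F xA yA bA /(_ F card_F x y) xy_conn.
have sym_conn := sym_connect_sym (remove_edges_sym F).
have A_closed : closed (remove_edges g F) (mem A).
  apply: (intro_closed sym_conn) => a b /andP[gab ab_F] aA.
  by apply: contraNT ab_F => bA'; apply: bA aA bA' gab.
by move: yA; rewrite -(closed_connect A_closed xy_conn) xA.
Qed.

Lemma deg_le_in_out A x : x \in A ->
  deg g x <= #|A|.-1 + #|[set y | (y \notin A) && g x y]|.
Proof.
move=> xA; rewrite /deg -(cardID (mem A) [pred y | g x y]); apply: leq_add.
  rewrite (cardsD1 x A) xA add1n /=; apply/subset_leq_card/subsetP => y.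
  rewrite !inE /= => /andP[gxy ->]; rewrite andbT.
  by apply: contraTneq gxy => ->; exact: g_simple.2.
by apply/subset_leq_card/subsetP => y; rewrite !inE /= andbC.
Qed.

Lemma sum_deg_boundary_le A F : boundary_within A F ->
  \sum_(x in A) deg g x <= #|A| * #|A|.-1 + #|F|.
Proof.
move=> bA.
pose out x := #|[set y | (y \notin A) && g x y]|.
apply: (@leq_trans (\sum_(x in A) (#|A|.-1 + out x))).
  by apply: leq_sum => x; apply: deg_le_in_out.
rewrite big_split /= sum_nat_const leq_add2l.
under eq_bigr => x _ do rewrite /out -sum1dep_card.
rewrite (pair_big_dep (mem A) (fun x y => (y \notin A) && g x y) (fun _ _ => 1)) /=.
rewrite sum1dep_card.
set D := [set p | _].
rewrite -(@card_in_imset _ _ (fun p : 'I_n * 'I_n => [set p.1; p.2]) (mem D)).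
  apply: subset_leq_card; apply/subsetP => _ /imsetP[[x y] + ->] /=.
  by rewrite !inE /= => /and3P[xA yA gxy]; apply: bA.
move=> [x y] [x' y']; rewrite !inE /= => /and3P[xA yA _] /and3P[xA' yA' _] eq_xy.
have /set2P[-> | eq_x] : x \in [set x'; y'] by rewrite -eq_xy set21.
  have /set2P[eq_y | -> //] : y \in [set x'; y'] by rewrite -eq_xy set22.
  by move: yA; rewrite eq_y xA'.
by move: xA; rewrite eq_x (negbTE yA').
Qed.

Lemma boundary_side_bound s m f : 0 < s < m -> s * m.-1 <= s * s.-1 + f -> m.-1 <= f.
Proof. by move=> s_range; nia. Qed.

Lemma k_edge_connected_of_degrees m k :
  n = m + m -> 2 <= k -> k.*2 <= m.+1 -> (forall u, m.-1 <= deg g u) ->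
  m.-1 * n + k.-1.*2 < \sum_u deg g u -> k_edge_connected k g.
Proof.
move=> n_eq k_ge2 k_le min_deg big_sum F card_F u v.
apply/negPn/negP => /disconnected_boundary[A [uA vA bA]].
have deg_lb (B : {set 'I_n}) : #|B| * m.-1 <= \sum_(x in B) deg g x.
  by rewrite -sum_nat_const; apply: leq_sum.
have sum_split : \sum_u deg g u = \sum_(x in A) deg g x + \sum_(x in ~: A) deg g x.
  by rewrite (bigID (mem A)) /=; congr (_ + _); apply: eq_bigl => x; rewrite inE.
have card_split : #|A| + #|~: A| = n by rewrite cardsC card_ord.
have A_gt0 : 0 < #|A| by apply/card_gt0P; exists u.
have Ac_gt0 : 0 < #|~: A| by apply/card_gt0P; exists v; rewrite inE.
have ubA := sum_deg_boundary_le bA; have lbA := deg_lb A.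
have ubAc := sum_deg_boundary_le (boundary_withinC bA); have lbAc := deg_lb (~: A).
(* A side of size [0 < s < m] forces at least [s * (m - s) >= m - 1 >= k]
   boundary edges, and two sides of size [m] contradict the degree sum. *)
have [ltA | gtA | eqA] := ltngtP #|A| m.
- by have := boundary_side_bound (s := #|A|) (m := m) (f := #|F|); lia.
- by have := boundary_side_bound (s := #|~: A|) (m := m) (f := #|F|); lia.
- have eqAc : #|~: A| = m by lia.
  by move: ubA ubAc; rewrite eqA eqAc; lia.
Qed.

End EdgeCuts.

Lemma card_ord_count n (p : pred nat) : #|[pred v : 'I_n | p v]| = count p (iota 0 n).
Proof.
rewrite -val_enum_ord count_map cardE /enum_mem size_filter -enumT /=.
by congr count; rewrite (@eq_filter _ _ predT) ?filter_predT.
Qed.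

Lemma card_ord_range n lo r : #|[set v : 'I_n | lo <= v < lo + r]| <= r.
Proof.
rewrite cardE -(size_map val) -[r in _ <= r](size_iota lo); apply: uniq_leq_size.
  by rewrite (map_inj_uniq val_inj) enum_uniq.
by move=> _ /mapP[v + ->]; rewrite mem_enum inE mem_iota.
Qed.

Lemma count_iotaS (p : pred nat) n : count p (iota 0 n.+1) = count p (iota 0 n) + p n.
Proof. by rewrite -addn1 iotaD count_cat /= addn0. Qed.

Lemma sumn_map_addn c s : sumn [seq c + x | x <- s] = c * size s + sumn s.
Proof. by elim: s => [|x s IH] /=; rewrite ?muln0 // IH mulnS; lia. Qed.

Definition psum (l : seq nat) i := sumn (take i l).

Lemma psumS l i : psum l i.+1 = psum l i + nth 0 l i.
Proof.
rewrite /psum; elim: l i => [|x l IH] [|i] /=; rewrite ?take0 ?addn0 //.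
by rewrite IH addnA.
Qed.

Lemma psum_mono l : {homo psum l : i j / i <= j}.
Proof.
move=> i j /subnK <-; elim: (j - i) => // d IH.
by rewrite addSn psumS (leq_trans IH) ?leq_addr.
Qed.

Lemma psum_oversize l i : size l <= i -> psum l i = sumn l.
Proof. by move=> le_l_i; rewrite /psum take_oversize. Qed.

(* Vertex [a < m] of the first clique is joined to the [l_a] vertices
   [m + l_0 + ... + l_(a-1)], ..., [m + l_0 + ... + l_a - 1] of the second. *)
Definition bridge m l a b := (a < m) && (m + psum l a <= b < m + psum l a.+1).

Definition clique_pair m l : rel nat :=
  fun a b => ((a < m) == (b < m)) && (a != b) || bridge m l a b || bridge m l b a.

Definition clique_pair_graph n m l : rel 'I_n := fun u v => clique_pair m l u v.
Arguments clique_pair_graph : clear implicits.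

Definition excess m r l i : nat := if i < m then nth 0 l i else i - m < r.

Lemma bridge_uniq m l a a' b : bridge m l a b -> bridge m l a' b -> a = a'.
Proof.
rewrite /bridge => /and3P[_ lo hi] /and3P[_ lo' hi'].
by case: (ltngtP a a') => // lt; have := psum_mono l lt; lia.
Qed.

Lemma bridge_range m l a b : size l <= m -> bridge m l a b -> m <= b < m + sumn l.
Proof.
move=> size_l /and3P[lt_am lo hi].
by have := psum_mono l lt_am; rewrite (@psum_oversize l m) //; lia.
Qed.

Lemma count_clique_pair_low m l u n : u < m ->
  count (clique_pair m l u) (iota 0 n) =
  minn m n - (u < n) + (minn (m + psum l u.+1) n - minn (m + psum l u) n).
Proof.
move=> lt_um; elim: n => [|n IH]; first by rewrite /=; lia.
rewrite count_iotaS IH /clique_pair /bridge.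
by have := psum_mono l (leqnSn u); have := psum_mono l (leqnSn n); lia.
Qed.

Lemma count_clique_pair_high m l u n : m <= u ->
  count (clique_pair m l u) (iota 0 n) = n - m - (u < n) + (u < m + psum l (minn m n)).
Proof.
move=> le_mu; elim: n => [|n IH]; first by rewrite /= minn0 /psum take0 /=; lia.
rewrite count_iotaS IH /clique_pair /bridge.
have := psum_mono l (leqnSn n).
by case: (ltnP n m) => lt_nm; [rewrite (minn_idPr _) | rewrite (minn_idPl _)]; lia.
Qed.

Section CliquePair.

Variables (n m : nat) (l : seq nat).
Hypotheses (n_eq : n = m + m) (size_l : size l <= m) (sumn_l : sumn l <= m).

Local Notation G := (clique_pair_graph n m l).

Lemma deg_clique_pair (u : 'I_n) : deg G u = m.-1 + excess m (sumn l) l u.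
Proof.
rewrite /deg card_ord_count /excess; have := ltn_ord u.
case: (ltnP u m) => [lt_um | le_mu] lt_un.
  rewrite count_clique_pair_low // psumS.
  have : psum l u.+1 <= psum l m by apply: psum_mono.
  by rewrite psumS (@psum_oversize l m) //; lia.
by rewrite count_clique_pair_high // (@psum_oversize l (minn m n)); lia.
Qed.

Lemma excess_seq :
  mkseq (excess m (sumn l) l) n =
  (l ++ nseq (m - size l) 0) ++ (nseq (sumn l) 1 ++ nseq (m - sumn l) 0).
Proof.
apply: (@eq_from_nth _ 0) => [|i]; first by rewrite size_mkseq !size_cat !size_nseq; lia.
rewrite size_mkseq => lt_in; rewrite nth_mkseq // /excess !nth_cat !size_cat !size_nseq.
have -> : (i < size l + (m - size l)) = (i < m) by lia.
case: (ltnP i m) => [lt_im | le_mi].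
  by case: (ltnP i (size l)) => // le_li; rewrite nth_nseq nth_default // if_same.
have -> : size l + (m - size l) = m by lia.
by rewrite !nth_nseq if_same; case: (_ < sumn l).
Qed.

Lemma perm_degseq_clique_pair :
  perm_eq (degseq G) [seq m.-1 + x | x <- mkseq (excess m (sumn l) l) n].
Proof.
rewrite /degseq perm_sort (eq_map deg_clique_pair) /mkseq -val_enum_ord -!map_comp.
exact: perm_refl.
Qed.

Lemma sumn_degseq_clique_pair : sumn (degseq G) = m.-1 * n + (sumn l).*2.
Proof.
rewrite (perm_sumn perm_degseq_clique_pair) sumn_map_addn size_mkseq excess_seq.
by rewrite !sumn_cat !sumn_nseq; lia.
Qed.

Lemma degseq_clique_pair_ge x : x \in degseq G -> m.-1 <= x.
Proof. by rewrite (perm_mem perm_degseq_clique_pair) => /mapP[y _ ->]; apply: leq_addr. Qed.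

End CliquePair.

Lemma degseq_clique_pair_inj n m l l' :
  n = m + m -> size l <= m -> sumn l <= m -> size l' = size l -> sumn l' = sumn l ->
  sorted geq l -> sorted geq l' ->
  degseq (clique_pair_graph n m l) = degseq (clique_pair_graph n m l') -> l = l'.
Proof.
move=> n_eq size_l sumn_l size_l' sumn_l' sorted_l sorted_l' eq_deg.
have le_l' : size l' <= m by rewrite size_l'.
have le_sum' : sumn l' <= m by rewrite sumn_l'.
have := perm_degseq_clique_pair n_eq size_l sumn_l.
rewrite eq_deg (permPl (perm_degseq_clique_pair n_eq le_l' le_sum')).
rewrite /= => /(perm_map_inj (@addnI _)).
rewrite !excess_seq // size_l' sumn_l' !perm_cat2r => perm_ll'.
have geq_trans : transitive geq by move=> a b c ab bc; apply: leq_trans bc ab.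
have geq_anti : antisymmetric geq by move=> a b; rewrite andbC => /anti_leq.
exact/esym/(sorted_eq geq_trans geq_anti sorted_l' sorted_l perm_ll').
Qed.

Lemma clique_pair_simple n m l : simple_graph (clique_pair_graph n m l).
Proof.
split=> [u v | u]; rewrite /clique_pair_graph /clique_pair.
  by rewrite eq_sym (eq_sym (val u)) orbAC.
by rewrite eqxx /= /bridge; lia.
Qed.

Lemma clique_pair_not_k_edge_connected n m l k :
  n = m + m -> 0 < m -> size l <= m -> sumn l < k ->
  ~ k_edge_connected k (clique_pair_graph n m l).
Proof.
move=> n_eq m_gt0 size_l lt_sum_k.
pose partner (v : 'I_n) := odflt v [pick a : 'I_n | bridge m l a v].
pose F := [set [set partner v; v] | v in [set v : 'I_n | m <= v < m + sumn l]].
have x_lt : 0 < n by lia.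
have y_lt : m < n by lia.
apply: (not_k_edge_connected_cut (clique_pair_simple n m l) (A := [set v : 'I_n | v < m])
  (F := F) (x := Ordinal x_lt) (y := Ordinal y_lt)).
- exact: leq_ltn_trans (leq_imset_card _ _) (leq_ltn_trans (card_ord_range _ _ _) lt_sum_k).
- by rewrite inE.
- by rewrite inE ltnn.
move=> x y; rewrite !inE -leqNgt => lt_xm le_my.
rewrite /clique_pair_graph /clique_pair lt_xm ltnNge le_my /= {2}/bridge ltnNge le_my orbF.
move=> bridge_xy; apply/imsetP; exists y; first by rewrite inE (bridge_range size_l bridge_xy).
rewrite /partner; case: pickP => [a bridge_ay | no_bridge] /=.
  by rewrite (val_inj (bridge_uniq bridge_ay bridge_xy)).
by have := no_bridge x; rewrite bridge_xy.
Qed.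

Lemma clique_pair_not_forcibly n m l k :
  n = m + m -> 0 < m -> size l <= m -> sumn l < k ->
  not_forcibly (k_edge_connected k) n (degseq (clique_pair_graph n m l)).
Proof.
move=> n_eq m_gt0 size_l lt_sum_k; have G_simple := clique_pair_simple n m l.
split; first by exists (clique_pair_graph n m l).
by move=> /(_ _ (conj G_simple erefl)); apply: clique_pair_not_k_edge_connected.
Qed.

Lemma forcibly_of_majorizes_two n m k l l' d :
  n = m + m -> 2 <= k -> k.*2 <= m.+1 ->
  size l <= m -> sumn l = k.-1 -> size l' = size l -> sumn l' = k.-1 ->
  sorted geq l -> sorted geq l' -> l <> l' ->
  majorizes d (degseq (clique_pair_graph n m l)) ->
  majorizes d (degseq (clique_pair_graph n m l')) ->
  forcibly (k_edge_connected k) n d.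
Proof.
move=> n_eq k_ge2 k_le size_l sum_l size_l' sum_l' sorted_l sorted_l' neq_ll'.
move=> [_ le_l] [_ le_l'] g [g_simple deg_g].
have sum_le : sumn l <= m by lia.
have sum_le' : sumn l' <= m by lia.
have size_le' : size l' <= m by rewrite size_l'.
apply: (k_edge_connected_of_degrees g_simple n_eq k_ge2 k_le).
  move=> u; apply: (all2_leq_lb le_l (degseq_clique_pair_ge n_eq size_l sum_le)).
  by rewrite -deg_g mem_degseq.
rewrite -sumn_degseq deg_g -sum_l -(sumn_degseq_clique_pair n_eq size_l sum_le).
rewrite ltn_neqAle leq_sumn_all2 // andbT; apply/eqP => eq_sum; apply: neq_ll'.
apply: (degseq_clique_pair_inj n_eq size_l sum_le size_l') => //; first by rewrite sum_l'.
rewrite (all2_leq_sumn_eq le_l eq_sum) (all2_leq_sumn_eq le_l') //.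
by rewrite -eq_sum !sumn_degseq_clique_pair // sum_l sum_l'.
Qed.

Lemma uniq_witnesses (A B : eqType) (R : A -> B -> Prop) (X : seq A) :
  uniq X -> {in X, forall x, exists y, R x y} ->
  (forall x x' y, x \in X -> x' \in X -> R x y -> R x' y -> x = x') ->
  exists L : seq B, [/\ uniq L, size L = size X & forall y, y \in L -> exists2 x, x \in X & R x y].
Proof.
elim: X => [|x X IH] /=; first by exists [::].
move=> /andP[xX uX] ex_R uniq_R.
have [||L [uL sizeL L_R]] := IH uX.
- by move=> z zX; apply: ex_R; rewrite inE zX orbT.
- by move=> z z' y zX z'X; apply: uniq_R; rewrite inE ?zX ?z'X orbT.
have [y Rxy] := ex_R x (mem_head _ _).
exists (y :: L); split=> /=; rewrite ?sizeL //.
  rewrite uL andbT; apply/negP => /L_R[z zX Rzy].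
  by move: xX; rewrite (uniq_R x z y) ?mem_head ?inE ?zX ?orbT.
move=> w; rewrite inE => /predU1P[-> | wL]; first by exists x; rewrite ?mem_head.
by have [z zX Rzw] := L_R w wL; exists z; rewrite // inE zX orbT.
Qed.

Definition partitions r := [set t : r.-tuple 'I_r.+1 |
  sorted geq [seq val i | i <- t] && (sumn [seq val i | i <- t] == r)].

Lemma mem_partitions r t : t \in partitions r ->
  [/\ size [seq val i | i <- t] = r, sumn [seq val i | i <- t] = r
    & sorted geq [seq val i | i <- t]].
Proof. by rewrite inE => /andP[sorted_t /eqP sum_t]; rewrite size_map size_tuple. Qed.

Section PartitionSinks.

Variables (r n m : nat).
Hypotheses (n_eq : n = m + m) (r_gt0 : 0 < r) (r_le : r.+1.*2 <= m.+1).

Definition sink_above (t : r.-tuple 'I_r.+1) (s : seq nat) :=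
  sink (k_edge_connected r.+1) n s /\
  majorizes s (degseq (clique_pair_graph n m [seq val i | i <- t])).

Lemma exists_sink_above t : t \in partitions r -> exists s, sink_above t s.
Proof.
move=> /mem_partitions[size_t sum_t _].
have m_gt0 : 0 < m by lia.
have size_le : size [seq val i | i <- t] <= m by rewrite size_t; lia.
have lt_sum : sumn [seq val i | i <- t] < r.+1 by rewrite sum_t.
have [s sink_s le_s] := sink_majorizes (clique_pair_not_forcibly n_eq m_gt0 size_le lt_sum).
by exists s.
Qed.

Lemma sink_above_inj t t' s : t \in partitions r -> t' \in partitions r ->
  sink_above t s -> sink_above t' s -> t = t'.
Proof.
move=> /mem_partitions[size_t sum_t sorted_t] /mem_partitions[size_t' sum_t' sorted_t'].
move=> [[[_ not_forcibly_s] _] le_t] [_ le_t'].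
apply/eqP/negPn/negP => neq_tt'; apply: not_forcibly_s.
have size_le : size [seq val i | i <- t] <= m by rewrite size_t; lia.
apply: (forcibly_of_majorizes_two n_eq (r_gt0 : 1 < r.+1) r_le size_le sum_t _ sum_t'
  sorted_t sorted_t' _ le_t le_t').
- by rewrite size_t size_t'.
- by move=> /(inj_map val_inj)/val_inj eq_tt'; rewrite eq_tt' eqxx in neq_tt'.
Qed.

End PartitionSinks.

Unset Implicit Arguments.

Theorem theorem3p1p3 (k n : nat) :
  2 <= k -> 4 * k - 2 <= n -> ~~ odd n ->
  exists L : seq (seq nat),
    [/\ uniq L, (forall d, d \in L -> sink (k_edge_connected k) n d)
      & partition_number (k - 1) <= size L].
Proof.
move=> k_ge2 n_ge n_even.
have [r eq_k] : exists r, k = r.+1 by exists k.-1; lia.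
have r_gt0 : 0 < r by lia.
set m := n./2.
have n_eq : n = m + m by rewrite addnn -[n in LHS]odd_double_half (negbTE n_even).
have r_le : r.+1.*2 <= m.+1 by lia.
have ex_sink : {in enum (partitions r), forall t, exists s, sink_above n m t s}.
  by move=> t; rewrite mem_enum; apply: exists_sink_above.
have sink_inj t t' s : t \in enum (partitions r) -> t' \in enum (partitions r) ->
    sink_above n m t s -> sink_above n m t' s -> t = t'.
  by rewrite !mem_enum; apply: sink_above_inj.
have [L [uniq_L size_L L_sink]] := uniq_witnesses (enum_uniq _) ex_sink sink_inj.
exists L; split=> //; first by move=> d /L_sink[t _ []]; rewrite eq_k.
by rewrite eq_k subn1 size_L -cardE.
Qed.
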